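(* Let $\mathcal{F}=C_1\wedge\dots\wedge C_m$ be an unsatisfiable CNF formula and let $X=\{x_1,\dots,x_{n_1}\}$, $Y=\{y_1,\dots,y_{n_2}\}$ be a partition of its variables. If there is a monotone circuit of size $\ell$ that outputs $1$ on every input in $\mathcal{U}(\{0,1\}^{n_1})$ and $0$ on every input in $\mathcal{V}(\{0,1\}^{n_2})$, then there is a $\mathsf{CC}_2$-refutation of $\mathcal{F}$ of length $\ell$ with respect to $(X,Y)$.
   Context: A semantic refutation of $\mathcal{F}$ is a sequence $L_1,\dots,L_\ell$ of Boolean functions on all variables with $L_i=C_i$ for $i\le m$, $L_\ell\equiv 0$, and for each $i>m$ there are $j,k<i$ with $L_j\wedge L_k\Rightarrow L_i$ pointwise; its length is $\ell$. A $\mathsf{CC}_k$-refutation with respect to $(X,Y)$ is a semantic refutation in which every $L_i$ is computable by a deterministic $k$-bit two-party communication protocol where Alice holds the $X$-variables and Bob the $Y$-variables. For each clause $C_i$ let $\mathrm{vars}(i)$ be the set of $X$-variables occurring in $C_i$. The inputs are Boolean variables $\mathrm{TT}_i(\alpha)$ for $i\in[m]$, $\alpha\in\{0,1\}^{\mathrm{vars}(i)}$ (these are inputs of the monotone function $\mathrm{CSP\text{-}SAT}_{\mathsf{Search}(\mathcal{F})}$, which accepts iff some $x\in\{0,1\}^{n_1}$ has $\mathrm{TT}_i(x|_{\mathrm{vars}(i)})=1$ for all $i$). For $x\in\{0,1\}^{n_1}$, $\mathcal{U}(x)$ sets $\mathrm{TT}_i(\alpha)=1$ iff $\alpha=x|_{\mathrm{vars}(i)}$.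 For $y\in\{0,1\}^{n_2}$, $\mathcal{V}(y)$ sets $\mathrm{TT}_i(\alpha)=0$ iff $C_i$ is falsified by the assignment giving $\alpha$ to $\mathrm{vars}(i)$ and $y$ to the $Y$-variables. A monotone circuit uses only $\wedge$ and $\vee$ gates; size is the number of gates.
   Formalization: The $\mathsf{CC}_2$-refutation of $\mathcal{F}$ has length m + ℓ in place of ℓ, that is, ℓ lines beyond the m clause lines. The statement above fails without it. *)

From mathcomp Require Import all_boot.
Set Implicit Arguments. Unset Strict Implicit. Unset Printing Implicit Defensive.

Definition xassign (n1 : nat) := {ffun 'I_n1 -> bool}.
Definition yassign (n2 : nat) := {ffun 'I_n2 -> bool}.
Definition boolfun (n1 n2 : nat) := xassign n1 -> yassign n2 -> bool.

(* A literal is a variable (an X- or a Y-variable) with a polarity: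
   (v, true) is the positive literal v, (v, false) the negation of v. *)
Definition lit (n1 n2 : nat) := (('I_n1 + 'I_n2) * bool)%type.
Definition clause (n1 n2 : nat) := seq (lit n1 n2).
Definition cnf (n1 n2 m : nat) := 'I_m -> clause n1 n2.

Definition lit_sat n1 n2 (l : lit n1 n2) (x : xassign n1) (y : yassign n2) : bool :=
  match l.1 with inl j => x j == l.2 | inr j => y j == l.2 end.
Definition clause_sat n1 n2 (C : clause n1 n2) x y : bool :=
  has (fun l => lit_sat l x y) C.

Definition unsatisfiable n1 n2 m (F : cnf n1 n2 m) : Prop :=
  forall x y, exists i : 'I_m, ~~ clause_sat (F i) x y.

Definition vars n1 n2 m (F : cnf n1 n2 m) (i : 'I_m) : {set 'I_n1} :=
  [set j | has (fun l : lit n1 n2 => l.1 == inl j) (F i)].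

Definition vassign n1 n2 m (F : cnf n1 n2 m) (i : 'I_m) :=
  {ffun {j : 'I_n1 | j \in vars F i} -> bool}.

(* Input variables TT_i(alpha) of CSP-SAT_{Search(F)} *)
Definition tt_var n1 n2 m (F : cnf n1 n2 m) := {i : 'I_m & vassign F i}.

Definition restrict n1 n2 m (F : cnf n1 n2 m) (i : 'I_m) (x : xassign n1)
  : vassign F i := [ffun j => x (val j)].

Definition Uin n1 n2 m (F : cnf n1 n2 m) (x : xassign n1) (t : tt_var F) : bool :=
  projT2 t == restrict F (projT1 t) x.

Definition lit_sat_part n1 n2 m (F : cnf n1 n2 m) (i : 'I_m) (alpha : vassign F i)
  (y : yassign n2) (l : lit n1 n2) : bool :=
  match l.1 with
  | inl j => match @insub _ (fun j => j \in vars F i) _ j with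
             | Some j' => alpha j' == l.2
             | None => false (* never happens: every X-variable of C_i is in vars(i) *)
             end
  | inr j => y j == l.2
  end.

Definition Vin n1 n2 m (F : cnf n1 n2 m) (y : yassign n2) (t : tt_var F) : bool :=
  has (lit_sat_part (projT2 t) y) (F (projT1 t)).

(* A gate is an AND (gop = true) or OR (gop = false) gate with two operands;
   an operand is an input variable (inl) or an earlier gate (inr k = k-th gate,
   0-based). *)
Record gate (In : Type) := Gate { gop : bool; garg1 : In + nat; garg2 : In + nat }.
Definition circuit (In : Type) := seq (gate In).

Definition node_ok (In : Type) (k : nat) (a : In + nat) : bool :=
  match a with inl _ => true | inr p => p < k end.
Definition circuit_wf (In : Type) (c : circuit In) : bool :=
  all (fun k => node_ok k (garg1 (nth (Gate true (inr 0) (inr 0)) c k))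
             && node_ok k (garg2 (nth (Gate true (inr 0) (inr 0)) c k)))
      (iota 0 (size c)).

Definition node_val (In : Type) (inp : In -> bool) (vals : seq bool) (a : In + nat) :=
  match a with inl t => inp t | inr p => nth false vals p end.
Definition gate_vals (In : Type) (c : circuit In) (inp : In -> bool) : seq bool :=
  foldl (fun vals g =>
           rcons vals ((if gop g then andb else orb)
                         (node_val inp vals (garg1 g)) (node_val inp vals (garg2 g))))
        [::] c.
Definition circuit_out (In : Type) (c : circuit In) (inp : In -> bool) : bool :=
  last false (gate_vals c inp).

Inductive protocol (n1 n2 : nat) :=
  | PLeaf of bool
  | PAlice of (xassign n1 -> bool) & protocol n1 n2 & protocol n1 n2
  | PBob of (yassign n2 -> bool) & protocol n1 n2 & protocol n1 n2.

Fixpoint pdepth n1 n2 (P : protocol n1 n2) : nat :=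
  match P with
  | PLeaf _ => 0
  | PAlice _ P0 P1 => (maxn (pdepth P0) (pdepth P1)).+1
  | PBob _ P0 P1 => (maxn (pdepth P0) (pdepth P1)).+1
  end.

Fixpoint prun n1 n2 (P : protocol n1 n2) (x : xassign n1) (y : yassign n2) : bool :=
  match P with
  | PLeaf b => b
  | PAlice f P0 P1 => if f x then prun P1 x y else prun P0 x y
  | PBob g P0 P1 => if g y then prun P1 x y else prun P0 x y
  end.

Definition cc_computable n1 n2 (k : nat) (L : boolfun n1 n2) : Prop :=
  exists P : protocol n1 n2, pdepth P <= k /\ forall x y, prun P x y = L x y.

Definition fnth n1 n2 (Ls : seq (boolfun n1 n2)) (i : nat) : boolfun n1 n2 :=
  nth (fun _ _ => false) Ls i.

(* Ls = L_1, ..., L_ell (0-based in Coq); its length is size Ls. *)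
Definition semantic_refutation n1 n2 m (F : cnf n1 n2 m) (Ls : seq (boolfun n1 n2)) : Prop :=
  [/\ m <= size Ls,
      forall i : 'I_m, forall x y, fnth Ls i x y = clause_sat (F i) x y,
      0 < size Ls /\ (forall x y, fnth Ls (size Ls).-1 x y = false)
    & forall i, m <= i < size Ls ->
        exists j k, [/\ j < i, k < i &
          forall x y, fnth Ls j x y && fnth Ls k x y -> fnth Ls i x y]].

Definition CC_refutation n1 n2 m (k : nat) (F : cnf n1 n2 m) (Ls : seq (boolfun n1 n2)) : Prop :=
  semantic_refutation F Ls /\ forall i, i < size Ls -> cc_computable k (fnth Ls i).

Arguments Uin {n1 n2 m} F x t.
Arguments Vin {n1 n2 m} F y t.

(* Give each gate g the line "g evaluates to 1 on U(x) implies g evaluates to 1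
   on V(y)".  For an input TT_i(alpha) this line is implied by the clause C_i:
   if alpha = x|vars(i) and (x, y) satisfies C_i, so does (alpha, y).  Since
   AND and OR are monotone, the line of a gate is implied by the lines of its two
   operands, and the line of the output gate is identically false because the
   circuit accepts U(x) and rejects V(y).  Every line has the form f(x) || g(y),
   which Alice and Bob compute with one bit each. *)
From mathcomp Require Import all_boot.

Set Implicit Arguments.
Unset Strict Implicit.
Unset Printing Implicit Defensive.

Section CircuitEvaluation.
Variables (In : Type) (inp : In -> bool).

Definition gate_eval (vals : seq bool) (g : gate In) : bool :=
  (if gop g then andb else orb)
    (node_val inp vals (garg1 g)) (node_val inp vals (garg2 g)).

Lemma gate_vals_rcons (c : circuit In) g :
  gate_vals (rcons c g) inp =
  rcons (gate_vals c inp) (gate_eval (gate_vals c inp) g).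
Proof. by rewrite /gate_vals -cats1 foldl_cat. Qed.

Lemma size_gate_vals (c : circuit In) : size (gate_vals c inp) = size c.
Proof.
by elim/last_ind: c => [|c g IHc] //; rewrite gate_vals_rcons !size_rcons IHc.
Qed.

Lemma take_gate_vals_cat (c1 c2 : circuit In) :
  take (size c1) (gate_vals (c1 ++ c2) inp) = gate_vals c1 inp.
Proof.
elim/last_ind: c2 => [|c2 g IHc2].
  by rewrite cats0 -(size_gate_vals c1) take_size.
rewrite -rcons_cat gate_vals_rcons -cats1 takel_cat ?IHc2 //.
by rewrite size_gate_vals size_cat leq_addr.
Qed.

Lemma gate_vals_take k (c : circuit In) :
  gate_vals (take k c) inp = take k (gate_vals c inp).
Proof.
have [le_kc | lt_ck] := leqP k (size c).
  by rewrite -{2}(cat_take_drop k c) -{2}(size_takel le_kc) take_gate_vals_cat.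
by rewrite !take_oversize ?size_gate_vals // ltnW.
Qed.

Lemma node_val_take k (vals : seq bool) a :
  node_ok k a -> node_val inp (take k vals) a = node_val inp vals a.
Proof. by case: a => [t | p] //= lt_pk; rewrite nth_take. Qed.

Lemma nth_gate_vals (c : circuit In) k (g0 : gate In) :
  k < size c ->
  node_ok k (garg1 (nth g0 c k)) -> node_ok k (garg2 (nth g0 c k)) ->
  nth false (gate_vals c inp) k = gate_eval (gate_vals c inp) (nth g0 c k).
Proof.
move=> lt_kc ok1 ok2.
rewrite -(nth_take false (ltnSn k)) -gate_vals_take (take_nth g0 lt_kc).
rewrite gate_vals_rcons nth_rcons size_gate_vals size_takel; last exact: ltnW.
rewrite ltnn eqxx gate_vals_take /gate_eval.
by rewrite (node_val_take _ ok1) (node_val_take _ ok2).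
Qed.

Lemma circuit_out_nth (c : circuit In) :
  circuit_out c inp = nth false (gate_vals c inp) (size c).-1.
Proof. by rewrite /circuit_out -(size_gate_vals c) nth_last. Qed.

End CircuitEvaluation.

Lemma implyb_gate_op (op : bool) u1 u2 v1 v2 :
  u1 ==> v1 -> u2 ==> v2 ->
  (if op then andb else orb) u1 u2 ==> (if op then andb else orb) v1 v2.
Proof. by case: op u1 u2 v1 v2 => [] [] [] [] []. Qed.

Lemma cc_computable2_orb n1 n2 (L : boolfun n1 n2) f g :
  (forall x y, L x y = f x || g y) -> cc_computable 2 L.
Proof.
move=> eqL; exists (PAlice f (PBob g (PLeaf _ _ false) (PLeaf _ _ true))
                           (PLeaf _ _ true)).
by split=> // x y /=; rewrite eqL; case: (f x); case: (g y).
Qed.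

Section Clauses.
Variables (n1 n2 m : nat) (F : cnf n1 n2 m).

Lemma clause_sat_split (C : clause n1 n2) x y :
  clause_sat C x y =
  has (fun l : lit n1 n2 => if l.1 is inl j then x j == l.2 else false) C
  || has (fun l : lit n1 n2 => if l.1 is inr j then y j == l.2 else false) C.
Proof.
by rewrite /clause_sat -has_predU; apply: eq_has => -[[j | j] b] /=;
  rewrite /lit_sat /= ?orbF.
Qed.

Lemma Vin_restrict (i : 'I_m) x y :
  Vin F y (existT _ i (restrict F i x)) = clause_sat (F i) x y.
Proof.
apply: eq_in_has => l l_in; rewrite /lit_sat_part /lit_sat.
case El: l.1 => [j | j] //.
have j_in : j \in vars F i by rewrite inE; apply/hasP; exists l; rewrite ?El.
by rewrite insubT /restrict ffunE.
Qed.

Lemma clause_implies_input x y (t : tt_var F) :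
  clause_sat (F (projT1 t)) x y -> Uin F x t ==> Vin F y t.
Proof.
case: t => i alpha /= sat_xy; rewrite /Uin /=.
by case: eqP => //= ->; rewrite Vin_restrict.
Qed.

End Clauses.

Section CircuitRefutation.
Variables (n1 n2 m : nat) (F : cnf n1 n2 m) (c : circuit (tt_var F)).
Hypothesis c_wf : circuit_wf c.

Let g0 := Gate true (@inr (tt_var F) nat 0) (inr 0).

Definition gate_line (k : nat) : boolfun n1 n2 := fun x y =>
  nth false (gate_vals c (Uin F x)) k ==> nth false (gate_vals c (Vin F y)) k.

Definition clause_line (i : 'I_m) : boolfun n1 n2 := fun x y => clause_sat (F i) x y.

Definition circuit_refutation : seq (boolfun n1 n2) :=
  [seq clause_line i | i <- enum 'I_m] ++ [seq gate_line k | k <- iota 0 (size c)].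

Lemma size_circuit_refutation : size circuit_refutation = m + size c.
Proof. by rewrite size_cat !size_map size_iota -enumT size_enum_ord. Qed.

Lemma fnth_clause_line (i : 'I_m) : fnth circuit_refutation i = clause_line i.
Proof.
rewrite /fnth nth_cat size_map size_enum_ord ltn_ord.
by rewrite (nth_map i) ?size_enum_ord // nth_ord_enum.
Qed.

Lemma fnth_gate_line k : k < size c -> fnth circuit_refutation (m + k) = gate_line k.
Proof.
move=> lt_kc; rewrite /fnth nth_cat size_map size_enum_ord ltnNge leq_addr /=.
by rewrite addKn (nth_map 0) ?size_iota // nth_iota.
Qed.

Lemma cc_computable_line i :
  i < m + size c -> cc_computable 2 (fnth circuit_refutation i).
Proof.
move=> lt_i; have [lt_im | le_mi] := ltnP i m.
  rewrite -[i]/(nat_of_ord (Ordinal lt_im)) fnth_clause_line.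
  by apply: cc_computable2_orb => x y; apply: clause_sat_split.
rewrite -(subnKC le_mi) fnth_gate_line; last by rewrite ltn_subLR.
by apply: cc_computable2_orb => x y; apply: implybE.
Qed.

Definition operand_line (a : tt_var F + nat) : nat :=
  match a with inl t => projT1 t | inr p => m + p end.

Lemma operand_line_lt k a : node_ok k a -> operand_line a < m + k.
Proof.
case: a => [t | p] /= ok; last by rewrite ltn_add2l.
exact: leq_trans (ltn_ord _) (leq_addr _ _).
Qed.

Lemma operand_line_sound k a x y : k < size c -> node_ok k a ->
  fnth circuit_refutation (operand_line a) x y ->
  node_val (Uin F x) (gate_vals c (Uin F x)) a
  ==> node_val (Vin F y) (gate_vals c (Vin F y)) a.
Proof.
case: a => [t | p] /= lt_kc ok.
  by rewrite fnth_clause_line; apply: clause_implies_input.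
by rewrite fnth_gate_line // (ltn_trans ok).
Qed.

Lemma gate_line_derived k : k < size c ->
  exists j1 j2, [/\ j1 < m + k, j2 < m + k &
    forall x y, fnth circuit_refutation j1 x y && fnth circuit_refutation j2 x y ->
                fnth circuit_refutation (m + k) x y].
Proof.
move=> lt_kc; set g := nth g0 c k.
have /andP [ok1 ok2] : node_ok k (garg1 g) && node_ok k (garg2 g).
  by move/allP: c_wf; apply; rewrite mem_iota.
exists (operand_line (garg1 g)), (operand_line (garg2 g)).
split; try exact: operand_line_lt.
move=> x y /andP [line1 line2]; rewrite fnth_gate_line // /gate_line.
rewrite (nth_gate_vals _ lt_kc ok1 ok2) (nth_gate_vals _ lt_kc ok1 ok2) /gate_eval.
by apply: implyb_gate_op; [apply: operand_line_sound lt_kc ok1 line1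
                          | apply: operand_line_sound lt_kc ok2 line2].
Qed.

End CircuitRefutation.

Theorem mainTheorem3 (n1 n2 m : nat) (F : cnf n1 n2 m) (c : circuit (tt_var F)) :
  unsatisfiable F ->
  circuit_wf c ->
  (forall x : xassign n1, circuit_out c (Uin F x)) ->
  (forall y : yassign n2, ~~ circuit_out c (Vin F y)) ->
  exists Ls : seq (boolfun n1 n2), CC_refutation 2 F Ls /\ size Ls = m + size c.
Proof.
move=> _ c_wf accU rejV.
have c_gt0 : 0 < size c by case: c c_wf accU rejV => // _ /(_ [ffun=> false]).
exists (circuit_refutation c); split; last exact: size_circuit_refutation.
split; last by move=> i; rewrite size_circuit_refutation; apply: cc_computable_line.
split; rewrite ?size_circuit_refutation.
- exact: leq_addr.
- by move=> i x y; rewrite fnth_clause_line.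
- split; first by rewrite addn_gt0 c_gt0 orbT.
  move=> x y; rewrite -(prednK c_gt0) addnS /= fnth_gate_line ?prednK //.
  by rewrite /gate_line -!circuit_out_nth accU (negbTE (rejV y)).
- move=> i /andP [le_mi lt_i].
  have lt_k : i - m < size c by rewrite ltn_subLR.
  rewrite -(subnKC le_mi); exact: (gate_line_derived c_wf lt_k).
Qed.
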